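(* Let $Q\in GL(n,\mathbb{C})$ be a matrix such that $Q\bar Q\in\mathbb{R}I_n$. Then the condition $\operatorname{Tr}(QQ^* )=\operatorname{Tr}((QQ^* )^{-1})$ is equivalent to: $Q\bar Q=\pm I_n$ if $n$ is even, and $Q\bar Q=I_n$ if $n$ is odd.
   Context: $\bar Q$ denotes the entrywise complex conjugate of $Q$ and $Q^*$ its conjugate transpose. *)

From HB Require Import structures.
From mathcomp Require Import all_boot all_order all_algebra.
From mathcomp Require Import all_reals.
From mathcomp.real_closed Require Import complex.
Set Implicit Arguments. Unset Strict Implicit. Unset Printing Implicit Defensive.
Import Order.TTheory GRing.Theory Num.Theory.
Local Open Scope ring_scope.

Definition mxconj (R : realType) (m n : nat) (Q : 'M[R[i]]_(m, n)) : 'M[R[i]]_(m, n) :=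
  map_mx (fun z => z^*) Q.

Definition mxadj (R : realType) (m n : nat) (Q : 'M[R[i]]_(m, n)) : 'M[R[i]]_(n, m) :=
  (mxconj Q)^T.

From HB Require Import structures.
From mathcomp Require Import all_boot all_order all_algebra.
From mathcomp Require Import all_reals.
From mathcomp.real_closed Require Import complex.
Import Order.TTheory GRing.Theory Num.Theory.
Local Open Scope ring_scope.

(* Write Q Qbar = r I with r real. Conjugating gives Qbar Q = r I, hence
   (Q Q^* )^-1 = r^-2 Q^T Qbar, whose trace is r^-2 Tr(Q Q^* ). Since Tr(Q Q^* ) is the
   squared Frobenius norm of the invertible Q, the trace condition reads r^2 = 1.
   For odd n the root r = -1 is excluded because r^n = det Q * conj (det Q) >= 0. *)

Lemma eq_scalar_mx (F : nzRingType) (n : nat) (a b : F) :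
  (a%:M : 'M_n.+1) = b%:M <-> a = b.
Proof.
by split=> [/matrixP /(_ ord0 ord0) | ->]; rewrite ?mxE ?eqxx ?mulr1n.
Qed.

Section MatrixConjugate.

Variable R : realType.
Implicit Types (m n p : nat) (a : R[i]).

Lemma mxconjK m n : involutive (@mxconj R m n).
Proof. by move=> A; apply/matrixP => i j; rewrite !mxE conjCK. Qed.

Lemma mxconjM m n p (A : 'M[R[i]]_(m, n)) (B : 'M_(n, p)) :
  mxconj (A *m B) = mxconj A *m mxconj B.
Proof. exact: map_mxM. Qed.

Lemma mxconj_scalar n a : mxconj (a%:M : 'M_n) = a^*%:M.
Proof. exact: map_scalar_mx. Qed.

Lemma det_mxconj n (A : 'M[R[i]]_n) : \det (mxconj A) = (\det A)^*.
Proof. exact: det_map_mx. Qed.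

Lemma mxtrace_mulmx_adj m n (A : 'M[R[i]]_(m, n)) :
  \tr (A *m mxadj A) = \sum_i \sum_j A i j * (A i j)^*.
Proof. by apply: eq_bigr => i _; rewrite mxE; apply: eq_bigr => j _; rewrite !mxE. Qed.

Lemma mxtrace_mulmx_adj_eq0 m n (A : 'M[R[i]]_(m, n)) :
  (\tr (A *m mxadj A) == 0) = (A == 0).
Proof.
apply/eqP/eqP => [trA0 | ->]; last by rewrite mul0mx mxtrace0.
have row_ge0 i : 0 <= \sum_j A i j * (A i j)^*.
  by apply: sumr_ge0 => j _; apply: mul_conjC_ge0.
apply/matrixP => i j; rewrite mxE.
move: trA0; rewrite mxtrace_mulmx_adj => /psumr_eq0P rowsA0.
have /psumr_eq0P rowA0 := rowsA0 (fun i _ => row_ge0 i) i isT.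
by apply/eqP; rewrite -mul_conjC_eq0 rowA0 // => k _; apply: mul_conjC_ge0.
Qed.

End MatrixConjugate.

Section ConjugateSquareScalar.

Context {R : realType} {n : nat} {Q : 'M[R[i]]_n} {r : R[i]}.
Hypotheses (r_real : r \is Num.real) (QQconj : Q *m mxconj Q = r%:M).

Lemma mulmx_conjl_scalar : mxconj Q *m Q = r%:M.
Proof.
by rewrite -{2}[Q]mxconjK -mxconjM QQconj mxconj_scalar (conj_Creal r_real).
Qed.

Lemma det_mul_conj_scalar : \det Q * (\det Q)^* = r ^+ n.
Proof. by rewrite -det_mxconj -det_mulmx QQconj det_scalar. Qed.

Lemma scalar_neq0 : (0 < n)%N -> Q \in unitmx -> r != 0.
Proof.
move=> n_gt0; rewrite unitmxE unitfE -mul_conjC_eq0 det_mul_conj_scalar.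
by rewrite expf_eq0 n_gt0.
Qed.

Lemma scalar_neqN1 : odd n -> r != -1.
Proof.
move=> n_odd; apply/eqP => r_N1; have := mul_conjC_ge0 (\det Q).
by rewrite det_mul_conj_scalar r_N1 -signr_odd n_odd expr1 ler0N1.
Qed.

Hypothesis r_neq0 : r != 0.

Lemma invmx_mulmx_adj : invmx (Q *m mxadj Q) = r^-2 *: (Q^T *m mxconj Q).
Proof.
have inv_left : r^-2 *: (Q^T *m mxconj Q) *m (Q *m mxadj Q) = 1%:M.
  rewrite -scalemxAl mulmxA -[_ *m Q]mulmxA mulmx_conjl_scalar mul_mx_scalar.
  rewrite -scalemxAl -trmx_mul mulmx_conjl_scalar tr_scalar_mx !scale_scalar_mx.
  by rewrite -[r in r * r]expr1 -exprD mulVf // expf_neq0.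
have [_ P_unit] := mulmx1_unit inv_left.
by rewrite -[LHS]mul1mx -inv_left -mulmxA mulmxV // mulmx1.
Qed.

Lemma mxtrace_invmx_mulmx_adj :
  \tr (invmx (Q *m mxadj Q)) = r^-2 * \tr (Q *m mxadj Q).
Proof.
by rewrite invmx_mulmx_adj mxtraceZ -mxtrace_tr trmx_mul trmxK mxtrace_mulC.
Qed.

End ConjugateSquareScalar.

Theorem proposition1 (R : realType) (n : nat) (Q : 'M[R[i]]_n) :
  Q \in unitmx ->
  (exists r : R[i], r \is Num.real /\ Q *m mxconj Q = r%:M) ->
  (\tr (Q *m mxadj Q) = \tr (invmx (Q *m mxadj Q)) <->
   (if odd n then Q *m mxconj Q = 1%:M
    else Q *m mxconj Q = 1%:M \/ Q *m mxconj Q = - 1%:M)).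
Proof.
case: n Q => [|n] Q Qunit [r [r_real QQconj]].
  by split=> _; [left; rewrite !flatmx0 | rewrite /mxtrace !big_ord0].
have r_neq0 : r != 0 by apply: scalar_neq0 QQconj _ Qunit.
have trP_neq0 : \tr (Q *m mxadj Q) != 0.
  rewrite mxtrace_mulmx_adj_eq0; apply: contraTneq Qunit => ->.
  by rewrite unitmxE det0 unitr0.
have trace_cond : \tr (Q *m mxadj Q) = r^-2 * \tr (Q *m mxadj Q) <->
                  (r == 1) || (r == -1).
  rewrite -sqrf_eq1 -invr_eq1 -{1}[\tr _]mul1r.
  by split=> [/(mulIf trP_neq0) <- | /eqP ->].
rewrite (mxtrace_invmx_mulmx_adj r_real QQconj r_neq0) trace_cond QQconj.
rewrite -(raddfN (@scalar_mx _ _)).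
case: ifP => n_odd; rewrite !eq_scalar_mx.
  by rewrite (negPf (scalar_neqN1 QQconj n_odd)) orbF; split=> [/eqP | ->].
by split=> [/orP[] /eqP-> | [] ->]; rewrite ?eqxx ?orbT //; [left | right].
Qed.
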